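(* Let $\mathfrak h_3=\mathbb{R}^3$ with basis $e_1,e_2,e_3$ and Lie bracket $\mu$ given by $\mu(e_1,e_2)=e_3$, $\mu(e_1,e_3)=\mu(e_2,e_3)=0$ (the Heisenberg Lie algebra), dual basis $e^1,e^2,e^3$, and let $g_0=e^1\otimes e^1+e^2\otimes e^2+e^3\otimes e^3$, with orientation $e^{123}=e^1\wedge e^2\wedge e^3$. Let $a,\lambda\in\mathbb{R}$, $H_0=a\,e^{123}$, $\theta_0=\theta_ie^i\in\mathfrak h_3^*$, $\omega\in\Lambda^2\mathfrak h_3^*$, and let $D$ be a derivation of $\mathfrak h_3$ that is symmetric with respect to $g_0$. Then the generalized Ricci soliton equations \[ \mathrm{Rc}_{g_0}=\lambda g_0+g_0(D\cdot,\cdot)+\tfrac14H_0\circ_{g_0}H_0-\tfrac14\mathcal{L}_{g_0^{-1}\theta_0}g_0,\qquad \omega=-d^*_{g_0}H_0+\tfrac12 d\theta_0-\tfrac12\iota_{g_0^{-1}\theta_0}H_0 \] hold if and only if \[ \lambda=-\tfrac12(3+a^2),\quad D=e^1\otimes e_1+e^2\otimes e_2+2\,e^3\otimes e_3,\quad \theta_1=\theta_2=0,\quad \omega=-\tfrac12\theta_3(1+a)\,e^1\wedge e^2 . \] In particular $g_0$ is a generalized Ricci soliton for every $a,\theta_3\in\mathbb{R}$.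
   Context: All tensors are left-invariant on the Heisenberg group and identified with tensors on $\mathfrak h_3$. $\mathrm{Rc}_{g_0}$ is the Ricci tensor of the left-invariant metric $g_0$. $(H\circ_gH)(X,Y)=g(\iota_XH,\iota_YH)$ with $g$ the induced metric on 2-forms (in coordinates $g^{rl}g^{st}H_{irs}H_{jlt}$). For left-invariant $X$, $(\mathcal{L}_Xg)(Y,Z)=-g(\mu(X,Y),Z)-g(Y,\mu(X,Z))$; $g_0^{-1}\theta_0$ is the vector $g_0$-dual to $\theta_0$. For a left-invariant 1-form, $d\theta(X,Y)=-\theta(\mu(X,Y))$. $d^*_g=-{*_g}\,d\,{*_g}$ is the codifferential defined with the Hodge star of $g$ and the fixed orientation. A derivation is $D\in\mathfrak{gl}(\mathfrak h_3)$ with $D\mu(X,Y)=\mu(DX,Y)+\mu(X,DY)$. A Riemannian metric $g_0$ is a generalized Ricci soliton if such $\lambda,D,H_0$ (closed), $\theta_0,\omega$ exist. *)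

(* Everything is left-invariant and identified with tensors on h3 = R^3.
   Indices 0,1,2 stand for e_1,e_2,e_3.  A vector / 1-form is a function
   nat -> R (only indices < 3 matter); a bilinear form / 2-form / matrix is
   nat -> nat -> R; a 3-form is nat -> nat -> nat -> R.  All components are
   taken with respect to the basis e_i (resp. dual basis e^i). *)
From Stdlib Require Import Reals Arith.
Open Scope R_scope.

Definition vec := nat -> R.
Definition mat := nat -> nat -> R.
Definition form3 := nat -> nat -> nat -> R.

Definition sum3 (f : nat -> R) : R := f 0%nat + f 1%nat + f 2%nat.

Definition e (k : nat) : vec := fun i => if Nat.eqb i k then 1 else 0.

Definition g0 : mat := fun i j => if Nat.eqb i j then 1 else 0.

(* structure constants of the Heisenberg Lie algebra:
   mu(e_i,e_j) = sum_k c_h3 i j k e_k, with mu(e1,e2) = e3, mu(e1,e3)=mu(e2,e3)=0 *)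
Definition c_h3 (i j k : nat) : R :=
  match i, j, k with
  | 0%nat, 1%nat, 2%nat => 1
  | 1%nat, 0%nat, 2%nat => -1
  | _, _, _ => 0
  end.

Definition mu (X Y : vec) : vec :=
  fun k => sum3 (fun i => sum3 (fun j => X i * Y j * c_h3 i j k)).

Definition vadd (X Y : vec) : vec := fun i => X i + Y i.
Definition vsub (X Y : vec) : vec := fun i => X i - Y i.

Definition inner (g : mat) (X Y : vec) : R :=
  sum3 (fun i => sum3 (fun j => g i j * X i * Y j)).

Definition det3 (g : mat) : R :=
  g 0%nat 0%nat * (g 1%nat 1%nat * g 2%nat 2%nat - g 1%nat 2%nat * g 2%nat 1%nat)
  - g 0%nat 1%nat * (g 1%nat 0%nat * g 2%nat 2%nat - g 1%nat 2%nat * g 2%nat 0%nat)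
  + g 0%nat 2%nat * (g 1%nat 0%nat * g 2%nat 1%nat - g 1%nat 1%nat * g 2%nat 0%nat).

Definition cof3 (g : mat) (i j : nat) : R :=
  g ((i+1) mod 3)%nat ((j+1) mod 3)%nat * g ((i+2) mod 3)%nat ((j+2) mod 3)%nat
  - g ((i+1) mod 3)%nat ((j+2) mod 3)%nat * g ((i+2) mod 3)%nat ((j+1) mod 3)%nat.

Definition ginv (g : mat) : mat := fun i j => cof3 g j i / det3 g.

Definition sharp (g : mat) (theta : vec) : vec :=
  fun i => sum3 (fun j => ginv g i j * theta j).

(* Levi-Civita connection of a left-invariant metric (Koszul formula):
   2 g(nabla_X Y, Z) = g(mu(X,Y),Z) - g(mu(Y,Z),X) + g(mu(Z,X),Y) *)
Definition nabla (g : mat) (X Y : vec) : vec :=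
  fun k => sum3 (fun l => ginv g k l *
     (/2 * (inner g (mu X Y) (e l) - inner g (mu Y (e l)) X
            + inner g (mu (e l) X) Y))).

Definition Riem (g : mat) (X Y Z : vec) : vec :=
  vsub (vsub (nabla g X (nabla g Y Z)) (nabla g Y (nabla g X Z)))
       (nabla g (mu X Y) Z).

Definition Rc (g : mat) : mat :=
  fun i j => sum3 (fun k => Riem g (e k) (e i) (e j) k).

(* g(D.,.) : (X,Y) |-> g(DX,Y), where D e_j = sum_i D i j e_i *)
Definition matvec (D : mat) (X : vec) : vec :=
  fun i => sum3 (fun j => D i j * X j).
Definition gD (g : mat) (D : mat) : mat :=
  fun i j => inner g (matvec D (e i)) (e j).

Definition HcircH (g : mat) (H : form3) : mat :=
  fun i j => sum3 (fun r => sum3 (fun l => sum3 (fun s => sum3 (fun t =>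
     ginv g r l * ginv g s t * H i r s * H j l t)))).

Definition Lie (X : vec) (g : mat) : mat :=
  fun i j => - inner g (mu X (e i)) (e j) - inner g (e i) (mu X (e j)).

Definition d1 (theta : vec) : mat :=
  fun i j => - sum3 (fun k => theta k * mu (e i) (e j) k).

(* exterior derivative of a left-invariant 0-form (a constant function) *)
Definition d0 (f : R) : vec := fun _ => 0.

Definition iota (X : vec) (H : form3) : mat :=
  fun j k => sum3 (fun i => X i * H i j k).

Definition eps (i j k : nat) : R :=
  match i, j, k with
  | 0%nat, 1%nat, 2%nat => 1
  | 1%nat, 2%nat, 0%nat => 1
  | 2%nat, 0%nat, 1%nat => 1
  | 1%nat, 0%nat, 2%nat => -1
  | 0%nat, 2%nat, 1%nat => -1
  | 2%nat, 1%nat, 0%nat => -1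
  | _, _, _ => 0
  end.

(* Hodge star of g with the orientation e^{123}; vol_g = sqrt(det g) e^{123} *)
Definition star3 (g : mat) (H : form3) : R :=
  H 0%nat 1%nat 2%nat / sqrt (det3 g).
(* on 1-forms: *alpha = iota_{alpha^sharp} vol_g *)
Definition star1 (g : mat) (alpha : vec) : mat :=
  fun j k => sqrt (det3 g) * sum3 (fun i => sharp g alpha i * eps i j k).

(* codifferential of a 3-form: d^*_g H = - * d * H *)
Definition codiff3 (g : mat) (H : form3) : mat :=
  fun j k => - star1 g (d0 (star3 g H)) j k.

Definition H0 (a : R) : form3 := fun i j k => a * eps i j k.
Definition e12 : mat := fun i j =>
  (if andb (Nat.eqb i 0) (Nat.eqb j 1) then 1 else 0)
  - (if andb (Nat.eqb i 1) (Nat.eqb j 0) then 1 else 0).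

Definition Dsol : mat := fun i j =>
  if Nat.eqb i j then (if Nat.eqb i 2 then 2 else 1) else 0.

Definition is_derivation (D : mat) : Prop :=
  forall i j k, (i < 3)%nat -> (j < 3)%nat -> (k < 3)%nat ->
    matvec D (mu (e i) (e j)) k
    = mu (matvec D (e i)) (e j) k + mu (e i) (matvec D (e j)) k.

Definition g_symmetric (g D : mat) : Prop :=
  forall i j, (i < 3)%nat -> (j < 3)%nat ->
    inner g (matvec D (e i)) (e j) = inner g (e i) (matvec D (e j)).

Definition is_2form (omega : mat) : Prop :=
  forall i j, (i < 3)%nat -> (j < 3)%nat -> omega i j = - omega j i.

Definition GRS_equations (g : mat) (lam : R) (D : mat) (H : form3)
    (theta : vec) (omega : mat) : Prop :=
  (forall i j, (i < 3)%nat -> (j < 3)%nat ->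
     Rc g i j = lam * g i j + gD g D i j + /4 * HcircH g H i j
                - /4 * Lie (sharp g theta) g i j)
  /\
  (forall i j, (i < 3)%nat -> (j < 3)%nat ->
     omega i j = - codiff3 g H i j + /2 * d1 theta i j
                 - /2 * iota (sharp g theta) H i j).

(* For the round metric every term of the soliton equations is an explicit
   constant tensor: Rc(g0) = Dsol - 3/2 g0 (g0 is a nilsoliton with derivation
   Dsol), H0 o H0 = 2 a^2 g0, d^* H0 = 0, L_X g0 only has (e^i e^3)-components
   and d e^3 = - e^{12}.  A derivation maps e_3 = [e_1,e_2] to (D_11 + D_22) e_3,
   so the (e_i,e_3)-components of the Ricci equation force theta_1 = theta_2 = 0
   and D to be diagonal; the diagonal components then give D_11 = D_22 = 1,
   D_33 = 2 and lambda. *)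
From Pilot Require Import Defs.
From Stdlib Require Import Reals Arith Lra Lia.
Open Scope R_scope.

Ltac destruct_idx i := destruct i as [|[|[|i]]]; try lia.

Lemma mu_0 (X Y : vec) : mu X Y 0%nat = 0.
Proof. unfold mu, sum3, c_h3; simpl; ring. Qed.

Lemma mu_1 (X Y : vec) : mu X Y 1%nat = 0.
Proof. unfold mu, sum3, c_h3; simpl; ring. Qed.

Lemma mu_2 (X Y : vec) : mu X Y 2%nat = X 0%nat * Y 1%nat - X 1%nat * Y 0%nat.
Proof. unfold mu, sum3, c_h3; simpl; ring. Qed.

Lemma inner_g0 (X Y : vec) :
  inner g0 X Y = X 0%nat * Y 0%nat + X 1%nat * Y 1%nat + X 2%nat * Y 2%nat.
Proof. unfold inner, sum3, g0; simpl; ring. Qed.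

Lemma det3_g0 : det3 g0 = 1.
Proof. unfold det3, g0; simpl; ring. Qed.

Lemma ginv_g0 (i j : nat) : (i < 3)%nat -> (j < 3)%nat -> ginv g0 i j = g0 i j.
Proof.
  intros Hi Hj; unfold ginv; rewrite det3_g0.
  destruct_idx i; destruct_idx j; unfold cof3, g0; simpl; field.
Qed.

Lemma sharp_g0 (theta : vec) (i : nat) : (i < 3)%nat -> sharp g0 theta i = theta i.
Proof.
  intros Hi; unfold sharp, sum3; rewrite !ginv_g0 by lia.
  destruct_idx i; unfold g0; simpl; ring.
Qed.

Lemma nabla_g0_0 (X Y : vec) :
  nabla g0 X Y 0%nat = /2 * (Y 1%nat * X 2%nat + X 1%nat * Y 2%nat).
Proof.
  unfold nabla, sum3; rewrite !ginv_g0, !inner_g0, !mu_0, !mu_1, !mu_2 by lia.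
  unfold g0, e; simpl; field.
Qed.

Lemma nabla_g0_1 (X Y : vec) :
  nabla g0 X Y 1%nat = /2 * (- Y 0%nat * X 2%nat - X 0%nat * Y 2%nat).
Proof.
  unfold nabla, sum3; rewrite !ginv_g0, !inner_g0, !mu_0, !mu_1, !mu_2 by lia.
  unfold g0, e; simpl; field.
Qed.

Lemma nabla_g0_2 (X Y : vec) :
  nabla g0 X Y 2%nat = /2 * (X 0%nat * Y 1%nat - X 1%nat * Y 0%nat).
Proof.
  unfold nabla, sum3; rewrite !ginv_g0, !inner_g0, !mu_0, !mu_1, !mu_2 by lia.
  unfold g0, e; simpl; field.
Qed.

Lemma Rc_g0 (i j : nat) : (i < 3)%nat -> (j < 3)%nat ->
  Rc g0 i j = Dsol i j - 3/2 * g0 i j.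
Proof.
  intros Hi Hj.
  unfold Rc, Riem, vsub, sum3.
  repeat rewrite ?nabla_g0_0, ?nabla_g0_1, ?nabla_g0_2, ?mu_0, ?mu_1, ?mu_2.
  destruct_idx i; destruct_idx j; unfold Dsol, g0, e; simpl; field.
Qed.

Lemma gD_g0 (D : mat) (i j : nat) : (i < 3)%nat -> (j < 3)%nat ->
  gD g0 D i j = D j i.
Proof.
  intros Hi Hj; unfold gD; rewrite inner_g0; unfold matvec, sum3.
  destruct_idx i; destruct_idx j; unfold e; simpl; ring.
Qed.

Lemma HcircH_g0_H0 (a : R) (i j : nat) : (i < 3)%nat -> (j < 3)%nat ->
  HcircH g0 (H0 a) i j = 2 * a ^ 2 * g0 i j.
Proof.
  intros Hi Hj; unfold HcircH, sum3; rewrite !ginv_g0 by lia.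
  destruct_idx i; destruct_idx j; unfold H0, eps, g0; simpl; ring.
Qed.

Lemma Lie_g0 (X : vec) (i j : nat) :
  Lie X g0 i j =
    (X 1%nat * e i 0%nat - X 0%nat * e i 1%nat) * e j 2%nat
  + (X 1%nat * e j 0%nat - X 0%nat * e j 1%nat) * e i 2%nat.
Proof. unfold Lie; rewrite !inner_g0, !mu_0, !mu_1, !mu_2; ring. Qed.

Lemma codiff3_eq0 (g : mat) (H : Defs.form3) (i j : nat) : codiff3 g H i j = 0.
Proof. unfold codiff3, star1, d0, sharp, sum3; ring. Qed.

Lemma d1_h3 (theta : vec) (i j : nat) : (i < 3)%nat -> (j < 3)%nat ->
  Defs.d1 theta i j = - theta 2%nat * e12 i j.
Proof.
  intros Hi Hj; unfold Defs.d1, sum3; rewrite mu_0, mu_1, mu_2.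
  destruct_idx i; destruct_idx j; unfold e, e12; simpl; ring.
Qed.

Lemma iota_sharp_g0_H0 (a : R) (theta : vec) (i j : nat) :
  iota (sharp g0 theta) (H0 a) i j = a * sum3 (fun k => theta k * eps k i j).
Proof. unfold iota, sum3; rewrite !sharp_g0 by lia; unfold H0; ring. Qed.

Lemma eps_2 (i j : nat) : (i < 3)%nat -> (j < 3)%nat -> eps 2%nat i j = e12 i j.
Proof. intros Hi Hj; destruct_idx i; destruct_idx j; unfold e12; simpl; ring. Qed.

Lemma GRS_equations_g0_H0 (lam a : R) (D : mat) (theta : vec) (omega : mat) :
  GRS_equations g0 lam D (H0 a) theta omega <->
  (forall i j, (i < 3)%nat -> (j < 3)%nat ->
     Dsol i j - 3/2 * g0 i j = (lam + a ^ 2 / 2) * g0 i j + D j i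
       - /4 * ((theta 1%nat * e i 0%nat - theta 0%nat * e i 1%nat) * e j 2%nat
               + (theta 1%nat * e j 0%nat - theta 0%nat * e j 1%nat) * e i 2%nat))
  /\
  (forall i j, (i < 3)%nat -> (j < 3)%nat ->
     omega i j = - /2 * theta 2%nat * e12 i j
                 - /2 * a * sum3 (fun k => theta k * eps k i j)).
Proof.
  unfold GRS_equations.
  split; intros [Ricci Omega]; split; intros i j Hi Hj;
    [ specialize (Ricci i j Hi Hj) | specialize (Omega i j Hi Hj)
    | specialize (Ricci i j Hi Hj) | specialize (Omega i j Hi Hj) ];
    rewrite ?Rc_g0, ?gD_g0, ?HcircH_g0_H0, ?Lie_g0, ?codiff3_eq0, ?d1_h3,
      ?iota_sharp_g0_H0, ?sharp_g0 in * by lia;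
    lra.
Qed.

Lemma derivation_h3_e3 (D : mat) : is_derivation D ->
  D 0%nat 2%nat = 0 /\ D 1%nat 2%nat = 0 /\ D 2%nat 2%nat = D 0%nat 0%nat + D 1%nat 1%nat.
Proof.
  intros Hder.
  pose proof (Hder 0%nat 1%nat 0%nat ltac:(lia) ltac:(lia) ltac:(lia)) as Hk0.
  pose proof (Hder 0%nat 1%nat 1%nat ltac:(lia) ltac:(lia) ltac:(lia)) as Hk1.
  pose proof (Hder 0%nat 1%nat 2%nat ltac:(lia) ltac:(lia) ltac:(lia)) as Hk2.
  unfold matvec, mu, sum3, c_h3, e in Hk0, Hk1, Hk2; simpl in Hk0, Hk1, Hk2.
  repeat split; lra.
Qed.

Lemma Dsol_derivation : is_derivation Dsol.
Proof.
  intros i j k Hi Hj Hk; unfold matvec, mu, sum3.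
  destruct_idx i; destruct_idx j; destruct_idx k; unfold Dsol, e, c_h3; simpl; ring.
Qed.

Lemma Dsol_g0_symmetric : g_symmetric g0 Dsol.
Proof.
  intros i j Hi Hj; rewrite !inner_g0; unfold matvec, sum3.
  destruct_idx i; destruct_idx j; unfold Dsol, e; simpl; ring.
Qed.

Lemma scaled_e12_2form (c : R) : is_2form (fun i j => c * e12 i j).
Proof. intros i j Hi Hj; destruct_idx i; destruct_idx j; unfold e12; simpl; ring. Qed.

Lemma GRS_equations_g0_H0_forced (lam a : R) (D : mat) (theta : vec) (omega : mat) :
  is_derivation D -> GRS_equations g0 lam D (H0 a) theta omega ->
  lam = - / 2 * (3 + a ^ 2)
  /\ (forall i j, (i < 3)%nat -> (j < 3)%nat -> D i j = Dsol i j)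
  /\ theta 0%nat = 0 /\ theta 1%nat = 0
  /\ (forall i j, (i < 3)%nat -> (j < 3)%nat ->
        omega i j = - / 2 * theta 2%nat * (1 + a) * e12 i j).
Proof.
  intros Hder HGRS; apply GRS_equations_g0_H0 in HGRS as [Ricci Omega].
  destruct (derivation_h3_e3 D Hder) as (D02 & D12 & D22).
  pose proof (Ricci 0%nat 0%nat ltac:(lia) ltac:(lia)) as R00.
  pose proof (Ricci 0%nat 1%nat ltac:(lia) ltac:(lia)) as R01.
  pose proof (Ricci 0%nat 2%nat ltac:(lia) ltac:(lia)) as R02.
  pose proof (Ricci 1%nat 0%nat ltac:(lia) ltac:(lia)) as R10.
  pose proof (Ricci 1%nat 1%nat ltac:(lia) ltac:(lia)) as R11.
  pose proof (Ricci 1%nat 2%nat ltac:(lia) ltac:(lia)) as R12.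
  pose proof (Ricci 2%nat 0%nat ltac:(lia) ltac:(lia)) as R20.
  pose proof (Ricci 2%nat 1%nat ltac:(lia) ltac:(lia)) as R21.
  pose proof (Ricci 2%nat 2%nat ltac:(lia) ltac:(lia)) as R22.
  unfold Dsol, g0, e in R00, R01, R02, R10, R11, R12, R20, R21, R22.
  simpl in R00, R01, R02, R10, R11, R12, R20, R21, R22.
  assert (T0 : theta 0%nat = 0) by lra.
  assert (T1 : theta 1%nat = 0) by lra.
  assert (Hlam : lam = - / 2 * (3 + a ^ 2)) by lra.
  repeat split; try assumption.
  - intros i j Hi Hj; destruct_idx i; destruct_idx j; unfold Dsol; simpl; lra.
  - intros i j Hi Hj; rewrite Omega by assumption; unfold sum3.
    rewrite T0, T1, eps_2 by assumption; ring.
Qed.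

Lemma GRS_equations_g0_H0_of_values (lam a : R) (D : mat) (theta : vec) (omega : mat) :
  lam = - / 2 * (3 + a ^ 2) ->
  (forall i j, (i < 3)%nat -> (j < 3)%nat -> D i j = Dsol i j) ->
  theta 0%nat = 0 -> theta 1%nat = 0 ->
  (forall i j, (i < 3)%nat -> (j < 3)%nat ->
     omega i j = - / 2 * theta 2%nat * (1 + a) * e12 i j) ->
  GRS_equations g0 lam D (H0 a) theta omega.
Proof.
  intros Hlam HD T0 T1 Homega; apply GRS_equations_g0_H0; split; intros i j Hi Hj.
  - rewrite (HD j i Hj Hi), Hlam, T0, T1.
    destruct_idx i; destruct_idx j; unfold Dsol, g0, e; simpl; field.
  - rewrite Homega by assumption; unfold sum3.
    rewrite T0, T1, eps_2 by assumption; ring.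
Qed.

Theorem mainTheorem6 :
  (forall (a lam : R) (theta : vec) (omega D : mat),
     is_2form omega -> is_derivation D -> g_symmetric g0 D ->
     (GRS_equations g0 lam D (H0 a) theta omega
      <->
      (lam = - / 2 * (3 + a ^ 2)
       /\ (forall i j, (i < 3)%nat -> (j < 3)%nat -> D i j = Dsol i j)
       /\ theta 0%nat = 0 /\ theta 1%nat = 0
       /\ (forall i j, (i < 3)%nat -> (j < 3)%nat ->
             omega i j = - / 2 * theta 2%nat * (1 + a) * e12 i j))))
  /\
  (forall a theta3 : R,
     exists (lam : R) (D omega : mat),
       is_2form omega /\ is_derivation D /\ g_symmetric g0 D /\
       GRS_equations g0 lam D (H0 a)
         (fun i => if Nat.eqb i 2 then theta3 else 0) omega).
Proof.
  split.
  - intros a lam theta omega D _ Hder _; split.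
    + apply GRS_equations_g0_H0_forced, Hder.
    + intros (Hlam & HD & T0 & T1 & Homega).
      apply GRS_equations_g0_H0_of_values; assumption.
  - intros a theta3.
    exists (- / 2 * (3 + a ^ 2)), Dsol, (fun i j => - / 2 * theta3 * (1 + a) * e12 i j).
    split; [apply scaled_e12_2form |].
    split; [exact Dsol_derivation |].
    split; [exact Dsol_g0_symmetric |].
    apply GRS_equations_g0_H0_of_values; try reflexivity.
Qed.
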